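(* Let $N\ge1$, and let $q,t$ be parameters. For $n\in\mathbb{Z}$ define the generalized Macdonald operator $$\mathcal M_{1,n}=\sum_{i=1}^{N}x_i^{\,n}\prod_{j\neq i}\frac{t x_i-x_j}{x_i-x_j}\,\Gamma_i,$$ where $(\Gamma_if)(x_1,\dots,x_N)=f(\dots,qx_i,\dots)$, and the current $\mathfrak e(z)=\frac{q^{1/2}}{1-q}\sum_{n\in\mathbb{Z}}q^{n/2}z^n\mathcal M_{1,n}$. Then, as formal series in $z^{\pm1},w^{\pm1}$ with operator coefficients, $$g(z,w)\,\mathfrak e(z)\mathfrak e(w)+g(w,z)\,\mathfrak e(w)\mathfrak e(z)=0,\qquad g(z,w)=(z-qw)(z-t^{-1}w)(z-q^{-1}tw).$$
   Context: The operators act on symmetric functions in $x_1,\dots,x_N$. This is the $\mathfrak e\mathfrak e$ exchange relation of the Ding–Iohara–Miki (quantum toroidal $\mathfrak{gl}_1$) algebra. *)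

From HB Require Import structures.
From mathcomp Require Import all_boot all_order all_algebra all_fingroup.
Set Implicit Arguments. Unset Strict Implicit. Unset Printing Implicit Defensive.
Import Order.TTheory GRing.Theory Num.Theory.
Local Open Scope ring_scope.

Definition Gam (K : fieldType) (q : K) (N : nat) (i : 'I_N) (x : 'I_N -> K)
  : 'I_N -> K := fun j => if j == i then q * x j else x j.

Definition Mop (K : fieldType) (q t : K) (N : nat) (n : int)
  (f : ('I_N -> K) -> K) : ('I_N -> K) -> K :=
  fun x => \sum_(i < N) (x i ^ n *
     (\prod_(j < N | j != i) ((t * x i - x j) / (x i - x j))) * f (Gam q i x)).

(* Coefficient of z^n in e(z) = s/(1-q) sum_n s^n z^n M_{1,n}, s = q^{1/2}. *)
Definition ecoef (K : fieldType) (s q t : K) (N : nat) (n : int)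
  (f : ('I_N -> K) -> K) : ('I_N -> K) -> K :=
  fun x => s / (1 - q) * s ^ n * Mop q t n f x.

(* h(X) = (X - q)(X - t^-1)(X - q^-1 t), so that
   g(z,w) = (z - q w)(z - t^-1 w)(z - q^-1 t w) = sum_k h_k z^k w^(3-k). *)
Definition gpoly (K : fieldType) (q t : K) : {poly K} :=
  ('X - q%:P) * ('X - (t^-1)%:P) * ('X - (q^-1 * t)%:P).

Definition symmetric_fun (K : fieldType) (N : nat) (f : ('I_N -> K) -> K) :=
  forall (s : 'S_N) (x : 'I_N -> K), f (fun j => x (s j)) = f x.

(* Points where all denominators occurring are nonzero. *)
Definition generic_pt (K : fieldType) (q : K) (N : nat) (x : 'I_N -> K) :=
  (forall i, x i != 0) /\
  (forall i j : 'I_N, i != j -> x i != x j /\ x j != q * x i).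

From HB Require Import structures.
From mathcomp Require Import all_boot all_order all_algebra all_fingroup.
From mathcomp Require Import ring.
From Stdlib Require Import FunctionalExtensionality.
Import Order.TTheory GRing.Theory Num.Theory.
Local Open Scope ring_scope.

(* Expanding e(z)e(w) f at x gives a sum over ordered pairs (i, l) of terms
   f(Gamma_l Gamma_i x) z^n w^m with coefficient c_i(x) c_l(Gamma_i x)
   (s x_i)^n (s (Gamma_i x)_l)^m, where
   c_i(x) = prod_(j <> i) (t x_i - x_j) / (x_i - x_j).  Multiplying by g(z,w)
   and extracting the coefficient of z^A w^B turns the monomial sum into a
   value of the cubic h at (Gamma_i x)_l / x_i.  For i = l this ratio is q, a
   root of h.  For i <> l, the (i, l) term of g(z,w)e(z)e(w) and the (l, i)
   term of g(w,z)e(w)e(z) act on the same f(Gamma_i Gamma_l x) and cancel by a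
   rational identity in x_i, x_l, the factors with j <> i, l being common. *)

Lemma sum_coef_exp_shift (R : fieldType) (p : {poly R}) (n : nat)
    (a b : R) (A B : int) :
  a != 0 -> b != 0 -> (size p <= n.+1)%N ->
  \sum_(k < n.+1) p`_k * (a ^ (A - k%:Z) * b ^ (B - (n%:Z - k%:Z)))
  = a ^ (A - n%:Z) * b ^ (B - n%:Z) * (a ^+ n * p.[b / a]).
Proof.
move=> a0 b0 size_p; rewrite (horner_coef_wide _ size_p) !mulr_sumr.
apply: eq_bigr => k _.
have -> : A - k%:Z = (A - n%:Z) + (n%:Z + - k%:Z) by ring.
have -> : B - (n%:Z - k%:Z) = (B - n%:Z) + k%:Z by ring.
rewrite !expfzDr // -!exprnN exprMn exprVn -!exprnP; ring.
Qed.

Section Macdonald.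
Variables (K : fieldType) (N : nat) (q t s : K).

Lemma size_gpoly : (size (gpoly q t) <= 4)%N.
Proof.
rewrite /gpoly; apply: leq_trans (size_polyMleq _ _) _.
rewrite size_XsubC addn2.
by have := size_polyMleq ('X - q%:P) ('X - (t^-1)%:P); rewrite !size_XsubC.
Qed.

Lemma gpoly_q : (gpoly q t).[q] = 0.
Proof. by rewrite /gpoly !hornerE subrr !mul0r. Qed.

(* For (u, v) = (x_i, x_l), [u ^+ 3 * h.[v / u]] is g(x_l, x_i), and the two
   quotients are the factor j = l of c_i(x) and the factor j = i of c_l(Gamma_i x). *)
Lemma gpoly_exchange (u v : K) :
  q != 0 -> t != 0 -> u != 0 -> v != 0 ->
  u != v -> v != q * u -> u != q * v ->
  u ^+ 3 * (gpoly q t).[v / u] *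
    ((t * u - v) / (u - v) * ((t * v - q * u) / (v - q * u)))
  + v ^+ 3 * (gpoly q t).[u / v] *
    ((t * v - u) / (v - u) * ((t * u - q * v) / (u - q * v))) = 0.
Proof.
move=> q0 t0 u0 v0 uv vqu uqv; rewrite /gpoly !hornerM !hornerXsubC.
have uv' : u - v != 0 by rewrite subr_eq0.
have vu' : v - u != 0 by rewrite subr_eq0 eq_sym.
have vqu' : v - q * u != 0 by rewrite subr_eq0.
have uqv' : u - q * v != 0 by rewrite subr_eq0.
by field; rewrite q0 t0 u0 v0 uv' vu' vqu' uqv'.
Qed.

Definition mac_weight (i : 'I_N) (x : 'I_N -> K) : K :=
  \prod_(j < N | j != i) ((t * x i - x j) / (x i - x j)).

Lemma Gam_id (i l : 'I_N) (x : 'I_N -> K) : l != i -> Gam q i x l = x l.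
Proof. by rewrite /Gam => /negbTE ->. Qed.

Lemma GamC (i l : 'I_N) (x : 'I_N -> K) :
  Gam q l (Gam q i x) = Gam q i (Gam q l x).
Proof.
by apply: functional_extensionality => j; rewrite /Gam; case: (j == l); case: (j == i).
Qed.

Lemma mac_weight_split (i l : 'I_N) (x : 'I_N -> K) : i != l ->
  mac_weight i x = (t * x i - x l) / (x i - x l) *
     \prod_(j < N | (j != i) && (j != l)) ((t * x i - x j) / (x i - x j)).
Proof. by move=> il; rewrite /mac_weight (bigD1 l) // eq_sym. Qed.

Lemma mac_weight_Gam (i l : 'I_N) (x : 'I_N -> K) : i != l ->
  mac_weight l (Gam q i x) = (t * x l - q * x i) / (x l - q * x i) *
     \prod_(j < N | (j != l) && (j != i)) ((t * x l - x j) / (x l - x j)).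
Proof.
move=> il; have li : l != i by rewrite eq_sym.
rewrite /mac_weight (bigD1 i) //= Gam_id //; congr (_ * _).
  by rewrite /Gam eqxx.
by apply: eq_bigr => j /andP[_ ji]; rewrite !Gam_id.
Qed.

Definition ee_term (a b : int) (F : ('I_N -> K) -> K) (x : 'I_N -> K)
    (i l : 'I_N) : K :=
  (s / (1 - q)) ^+ 2 * ((s * x i) ^ a * (s * Gam q i x l) ^ b) *
  (mac_weight i x * mac_weight l (Gam q i x)) * F (Gam q l (Gam q i x)).

Lemma ecoef_ecoefE (a b : int) (F : ('I_N -> K) -> K) (x : 'I_N -> K) :
  ecoef s q t a (ecoef s q t b F) x =
  \sum_(p : 'I_N * 'I_N) ee_term a b F x p.1 p.2.
Proof.
rewrite -pair_bigA /ecoef /Mop !mulr_sumr; apply: eq_bigr => i _.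
rewrite !mulr_sumr; apply: eq_bigr => l _.
rewrite /ee_term /mac_weight !expfzMl; ring.
Qed.

Definition exchange_weight (i l : 'I_N) (x : 'I_N -> K) : K :=
  x i ^+ 3 * (gpoly q t).[Gam q i x l / x i] *
  (mac_weight i x * mac_weight l (Gam q i x)).

Lemma sum_gpoly_ee_term (A B : int) (F : ('I_N -> K) -> K) (x : 'I_N -> K)
    (i l : 'I_N) :
  q != 0 -> s != 0 -> x i != 0 -> x l != 0 ->
  \sum_(k < 4) (gpoly q t)`_k * ee_term (A - k%:Z) (B - (3 - k%:Z)) F x i l
  = (s / (1 - q)) ^+ 2 * s ^+ 3 * F (Gam q l (Gam q i x)) *
    ((s * x i) ^ (A - 3%:Z) * (s * Gam q i x l) ^ (B - 3%:Z)) *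
    exchange_weight i l x.
Proof.
move=> q0 s0 xi0 xl0.
have Gx0 : Gam q i x l != 0 by rewrite /Gam; case: (l == i); rewrite ?mulf_neq0.
rewrite /ee_term; set C := _ ^+ 2; set W := mac_weight _ _ * _; set Fv := F _.
transitivity (C * W * Fv * \sum_(k < 4) (gpoly q t)`_k *
    ((s * x i) ^ (A - k%:Z) * (s * Gam q i x l) ^ (B - (3 - k%:Z)))).
  by rewrite mulr_sumr; apply: eq_bigr => k _; ring.
rewrite sum_coef_exp_shift ?size_gpoly ?mulf_neq0 //.
have -> : s * Gam q i x l / (s * x i) = Gam q i x l / x i.
  by field; rewrite s0 xi0.
by rewrite /exchange_weight -/W exprMn; ring.
Qed.

Lemma exchange_weight_diag (i : 'I_N) (x : 'I_N -> K) :
  x i != 0 -> exchange_weight i i x = 0.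
Proof.
move=> xi0; rewrite /exchange_weight {1}/Gam eqxx mulfK // gpoly_q.
by rewrite mulr0 mul0r.
Qed.

Lemma exchange_weight_antisym (i l : 'I_N) (x : 'I_N -> K) :
  q != 0 -> t != 0 -> generic_pt q x -> i != l ->
  exchange_weight i l x + exchange_weight l i x = 0.
Proof.
move=> q0 t0 [x0 xne] il; have li : l != i by rewrite eq_sym.
have [xil xlqi] := xne _ _ il; have [_ xiql] := xne _ _ li.
rewrite /exchange_weight !Gam_id // (mac_weight_Gam i l) // (mac_weight_Gam l i) //.
rewrite (mac_weight_split i l x) // (mac_weight_split l i x) //.
set S_i := \prod_(j < N | _) _; set S_l := \prod_(j < N | _) _.
rewrite -[RHS](mulr0 (S_i * S_l)).
rewrite -(gpoly_exchange (x i) (x l) q0 t0 (x0 i) (x0 l) xil xlqi xiql); ring.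
Qed.

End Macdonald.

Theorem mainTheorem8 (K : fieldType) (N : nat) (q t s : K)
  (hN : (0 < N)%N) (hq0 : q != 0) (hq1 : q != 1) (ht0 : t != 0) (hs : s ^+ 2 = q)
  (A B : int) (f : ('I_N -> K) -> K) (hf : symmetric_fun f)
  (x : 'I_N -> K) (hx : generic_pt q x) :
  \sum_(k < 4)
     (gpoly q t)`_k *
       (ecoef s q t (A - k%:Z) (ecoef s q t (B - (3 - k%:Z)) f) x
      + ecoef s q t (B - k%:Z) (ecoef s q t (A - (3 - k%:Z)) f) x) = 0.
Proof.
have s0 : s != 0 by apply: contraNneq hq0 => s0; rewrite -hs s0 expr0n.
have x0 := hx.1.
under eq_bigr => k _ do rewrite !ecoef_ecoefE mulrDr !mulr_sumr -big_split.
rewrite exchange_big /=.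
under eq_bigr => p _ do rewrite big_split /= !sum_gpoly_ee_term //.
rewrite big_split /= [X in _ + X](reindex_inj (can_inj swap_pairK)) -big_split.
apply: big1 => -[i l] _ /=; case: (eqVneq i l) => [<- | il].
  by rewrite !exchange_weight_diag // !mulr0 addr0.
have li : l != i by rewrite eq_sym.
rewrite GamC !Gam_id // [(_ ^ (B - 3)) * _]mulrC -mulrDr.
by rewrite exchange_weight_antisym // mulr0.
Qed.
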